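(* Let $R$ be a commutative ring and $(A,d)$ a differential graded $R$-algebra, and suppose that the left dg-module $(A,d)$ over $(A,d)$ is a finite direct sum of dg-simple left dg-modules over $(A,d)$. Then for any dg-simple left dg-module $(S,\delta)$ over $(A,d)$ there is an integer $n\in\mathbb{Z}$ such that $(S,\delta)[n]$ is (isomorphic to) a direct summand of $(A,d)$ as left dg-module.
   Context: A differential graded (dg) $R$-algebra $(A,d)$ is a $\mathbb{Z}$-graded $R$-algebra $A$ with an $R$-linear degree-$1$ endomorphism $d$, $d^2=0$, $d(ab)=d(a)b+(-1)^{|a|}a\,d(b)$ for homogeneous $a,b$. A left dg-module $(M,\delta)$ is a graded left $A$-module with an $R$-linear degree-$1$ map $\delta$, $\delta^2=0$, $\delta(am)=d(a)m+(-1)^{|a|}a\,\delta(m)$. A dg-submodule is a graded submodule stable under $\delta$; morphisms are degree-$0$ $A$-linear maps commuting with differentials. $(S,\delta)$ is dg-simple if its only dg-submodules are $0$ and $S$ (and $S\neq 0$). For $n\in\mathbb{Z}$, $(M,\delta)[n]$ denotes the shifted dg-module, with degree-$k$ component $M^{k+n}$ (and the differential adjusted by the standard sign). *)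

From HB Require Import structures.
From mathcomp Require Import all_boot all_order all_algebra.
Set Implicit Arguments. Unset Strict Implicit. Unset Printing Implicit Defensive.
Import Order.TTheory GRing.Theory Num.Theory.
Local Open Scope ring_scope.

Definition sgnA {T : pzRingType} (i : int) : T := (-1) ^+ absz i.

Definition is_grading (T : zmodType) (G : int -> T -> Prop) : Prop :=
  (forall k, G k 0) /\
  (forall k x y, G k x -> G k y -> G k (x - y)) /\
  (forall x : T, exists (s : seq int) (f : int -> T),
      (forall k, G k (f k)) /\ x = \sum_(k <- s) f k) /\
  (forall (s : seq int) (f : int -> T), uniq s ->
      (forall k, k \in s -> G k (f k)) ->
      \sum_(k <- s) f k = 0 -> forall k, k \in s -> f k = 0).

Definition dg_algebra (R : comNzRingType) (A : algType R)
    (GA : int -> A -> Prop) (d : A -> A) : Prop :=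
  is_grading GA /\
  (forall k (r : R) (a : A), GA k a -> GA k (r *: a)) /\
  GA 0 1 /\
  (forall i j (a b : A), GA i a -> GA j b -> GA (i + j) (a * b)) /\
  (forall a b : A, d (a + b) = d a + d b) /\
  (forall (r : R) (a : A), d (r *: a) = r *: d a) /\
  (forall k (a : A), GA k a -> GA (k + 1) (d a)) /\
  (forall a : A, d (d a) = 0) /\
  (forall i (a b : A), GA i a -> d (a * b) = d a * b + sgnA i * (a * d b)).

(* (M, delta) is a left dg-module over (A, d), with grading GM.
   R acts on M through A (r . m := r%:A *: m). *)
Definition dg_module (R : comNzRingType) (A : algType R)
    (GA : int -> A -> Prop) (d : A -> A)
    (M : lmodType A) (GM : int -> M -> Prop) (delta : M -> M) : Prop :=
  is_grading GM /\
  (forall i j (a : A) (m : M), GA i a -> GM j m -> GM (i + j) (a *: m)) /\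
  (forall m n : M, delta (m + n) = delta m + delta n) /\
  (forall (r : R) (m : M), delta ((r%:A : A) *: m) = (r%:A : A) *: delta m) /\
  (forall k (m : M), GM k m -> GM (k + 1) (delta m)) /\
  (forall m : M, delta (delta m) = 0) /\
  (forall i (a : A) (m : M), GA i a ->
      delta (a *: m) = d a *: m + sgnA i *: (a *: delta m)).

Definition dg_submodule (A : pzRingType) (M : lmodType A)
    (GM : int -> M -> Prop) (delta : M -> M) (N : M -> Prop) : Prop :=
  N 0 /\
  (forall x y, N x -> N y -> N (x - y)) /\
  (forall (a : A) x, N x -> N (a *: x)) /\
  (forall x, N x -> N (delta x)) /\
  (forall (s : seq int) (f : int -> M), uniq s -> (forall k, GM k (f k)) ->
      N (\sum_(k <- s) f k) -> forall k, k \in s -> N (f k)).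

Definition dg_simple_sub (A : pzRingType) (M : lmodType A)
    (GM : int -> M -> Prop) (delta : M -> M) (N : M -> Prop) : Prop :=
  dg_submodule GM delta N /\
  (exists x, N x /\ x <> 0) /\
  (forall P : M -> Prop, dg_submodule GM delta P -> (forall x, P x -> N x) ->
      (forall x, P x -> x = 0) \/ (forall x, N x -> P x)).

Definition dg_simple (A : pzRingType) (M : lmodType A)
    (GM : int -> M -> Prop) (delta : M -> M) : Prop :=
  dg_simple_sub GM delta (fun _ => True).

Definition internal_dsum (M : zmodType) (m : nat) (N : 'I_m -> M -> Prop) : Prop :=
  (forall x : M, exists f : 'I_m -> M, (forall i, N i (f i)) /\ x = \sum_i f i) /\
  (forall f : 'I_m -> M, (forall i, N i (f i)) -> \sum_i f i = 0 ->
      forall i, f i = 0).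

(* f : S -> M induces an isomorphism of dg-modules from the shift (S, deltaS)[n]
   onto the dg-submodule N of (M, deltaM).  Convention for the shift:
   (S[n])^k = S^(k+n), differential (-1)^n deltaS, and action
   a .' s = (-1)^(n|a|) a s for homogeneous a.  Thus an isomorphism
   phi : S[n] -> N (degree 0, A-linear, commuting with differentials) is an
   additive bijection f : S -> N with f(S^(k+n)) in M^k,
   f((-1)^(n i) a s) = a f(s) and f((-1)^n deltaS s) = deltaM (f s). *)
Definition dg_shift_iso (A : pzRingType) (GA : int -> A -> Prop)
    (S : lmodType A) (GS : int -> S -> Prop) (deltaS : S -> S)
    (M : lmodType A) (GM : int -> M -> Prop) (deltaM : M -> M)
    (n : int) (f : S -> M) (N : M -> Prop) : Prop :=
  (forall x y, f (x + y) = f x + f y) /\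
  injective f /\
  (forall y, N y <-> exists x, f x = y) /\
  (forall k x, GS (k + n) x -> GM k (f x)) /\
  (forall i (a : A) x, GA i a -> f (sgnA (n * i) *: (a *: x)) = a *: f x) /\
  (forall x, f (sgnA n *: deltaS x) = deltaM (f x)).

From HB Require Import structures.
From mathcomp Require Import all_boot all_order all_algebra zify.
From Stdlib Require Import ClassicalEpsilon.
Import GRing.Theory.
Local Open Scope ring_scope.
Set Implicit Arguments. Unset Strict Implicit. Unset Printing Implicit Defensive.

(* A dg-simple module S contains a nonzero homogeneous cycle z, of degree n say
   (a nonzero homogeneous component of some element, or else its differential).
   Twisted by the sign (-1)^(n|b|), the map b |-> b z becomes a morphism of
   dg-modules A -> S[n]. Writing 1 = sum_i x_i along A = (+)_i N_i, it sends 1 to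
   z <> 0, so it does not vanish on some N_i. Its kernel meets the dg-simple N_i in
   a proper dg-submodule, hence in 0, and the image of N_i is a nonzero
   dg-submodule of the dg-simple S, hence all of S. So N_i is isomorphic to S[n],
   and the kernel is a complement of N_i in A. *)

Section AdditiveMaps.
Variables (U V : zmodType) (f : U -> V).
Hypothesis fD : {morph f : x y / x + y}.

Lemma additive0 : f 0 = 0.
Proof. by apply: (addrI (f 0)); rewrite -fD !addr0. Qed.

Lemma additiveN x : f (- x) = - f x.
Proof. by apply/eqP; rewrite -addr_eq0 -fD addNr additive0. Qed.

Lemma additiveB x y : f (x - y) = f x - f y.
Proof. by rewrite fD additiveN. Qed.

Lemma additive_sum (I : Type) (r : seq I) (P : pred I) (F : I -> U) :
  f (\sum_(i <- r | P i) F i) = \sum_(i <- r | P i) f (F i).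
Proof. exact: (big_morph f fD additive0). Qed.

End AdditiveMaps.

Section Signs.
Variable T : pzRingType.

Lemma sgnA_odd i : sgnA i = (-1) ^+ odd (absz i) :> T.
Proof. by rewrite /sgnA signr_odd. Qed.

Lemma sgnA0 : sgnA 0 = 1 :> T.
Proof. by rewrite /sgnA expr0. Qed.

Lemma sgnAD i j : sgnA (i + j) = sgnA i * sgnA j :> T.
Proof.
have oddD : odd (absz (i + j)) = odd (absz i) (+) odd (absz j) by lia.
by rewrite !sgnA_odd oddD signr_addb.
Qed.

Lemma sgnAMK i (x : T) : sgnA i * (sgnA i * x) = x.
Proof. exact: signrMK. Qed.

Lemma mul_sgnA i (x : T) : sgnA i * x = if odd (absz i) then - x else x.
Proof. by rewrite sgnA_odd mulr_sign. Qed.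

Lemma sgnAZK (M : lmodType T) i (m : M) : sgnA i *: (sgnA i *: m) = m.
Proof. by rewrite scalerA -{2}[sgnA i]mulr1 sgnAMK scale1r. Qed.

End Signs.

Lemma additive_sgnA (T T' : pzRingType) (f : T -> T') i x :
  {morph f : x y / x + y} -> f (sgnA i * x) = sgnA i * f x.
Proof. by move=> fD; rewrite !mul_sgnA; case: odd; rewrite ?additiveN. Qed.

Lemma big_pred1_uniq (R : Type) (idx : R) (op : Monoid.law idx) (I : eqType)
    (r : seq I) (i : I) (F : I -> R) :
  uniq r -> \big[op/idx]_(j <- r | j == i) F j = if i \in r then F i else idx.
Proof.
elim: r => [|j r IHr] /=; first by rewrite big_nil.
case/andP => jNr r_uniq; rewrite big_cons IHr // in_cons.
by case: eqVneq => [<-|] /=; rewrite ?(negbTE jNr) ?Monoid.mulm1.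
Qed.

Section GradedComponents.
Variables (T : zmodType) (G : int -> T -> Prop).

Definition homog_seq (l : seq (int * T)) := forall p, p \in l -> G p.1 p.2.

(* Any homogeneous decomposition will do: by [hcompE], [hcomp] does not depend on
   the choice. *)
Definition hdecomp (x : T) : seq (int * T) :=
  epsilon (inhabits [::]) (fun l => homog_seq l /\ x = \sum_(p <- l) p.2).

Definition hcomp (k : int) (x : T) : T := \sum_(p <- hdecomp x | p.1 == k) p.2.

Definition hsupp (x : T) : seq int := undup [seq p.1 | p <- hdecomp x].

Lemma sum_by_degree (l : seq (int * T)) :
  \sum_(p <- l) p.2 = \sum_(k <- undup [seq p.1 | p <- l]) \sum_(p <- l | p.1 == k) p.2.
Proof.
rewrite (exchange_big_dep predT) //= big_seq_cond [RHS]big_seq_cond.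
apply: eq_bigr => p /andP [pl _]; rewrite (eq_bigl (pred1 p.1)) => [|k].
  by rewrite big_pred1_uniq ?undup_uniq // mem_undup map_f.
by rewrite /= eq_sym.
Qed.

Hypothesis HG : is_grading G.

Lemma grading0 k : G k 0.
Proof. by case: HG. Qed.

Lemma gradingB k x y : G k x -> G k y -> G k (x - y).
Proof. by case: HG => _ [GB _]; apply: GB. Qed.

Lemma gradingN k x : G k x -> G k (- x).
Proof. by move=> Gx; rewrite -sub0r; apply: gradingB => //; apply: grading0. Qed.

Lemma gradingD k x y : G k x -> G k y -> G k (x + y).
Proof. by move=> Gx Gy; rewrite -[y]opprK; apply/gradingB/gradingN. Qed.

Lemma grading_sum (I : Type) (r : seq I) (P : pred I) (F : I -> T) k :
  (forall i, P i -> G k (F i)) -> G k (\sum_(i <- r | P i) F i).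
Proof.
move=> GF; elim/big_rec: _ => [|i x Pi Gx]; first exact: grading0.
exact: gradingD (GF _ Pi) Gx.
Qed.

Lemma homog_sum_eq0 (l : seq (int * T)) k : homog_seq l ->
  \sum_(p <- l) p.2 = 0 -> \sum_(p <- l | p.1 == k) p.2 = 0.
Proof.
move=> l_homog l_sum0.
have [kl|kNl] := boolP (k \in undup [seq p.1 | p <- l]); last first.
  rewrite big_seq_cond big1 // => p /andP [pl /eqP pk]; move: kNl.
  by rewrite mem_undup -pk map_f.
case: HG => _ [_ [_ grading_uniq]].
apply: (grading_uniq (undup [seq p.1 | p <- l])
                    (fun k => \sum_(p <- l | p.1 == k) p.2)) => //.
- exact: undup_uniq.
- move=> j _; rewrite big_seq_cond; apply: grading_sum => p /andP [pl /eqP <-].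
  exact: l_homog.
- by rewrite -sum_by_degree.
Qed.

Lemma hdecompP x : homog_seq (hdecomp x) /\ x = \sum_(p <- hdecomp x) p.2.
Proof.
apply: (epsilon_spec (inhabits [::])
                     (fun l => homog_seq l /\ x = \sum_(p <- l) p.2)).
case: HG => _ [_ [grading_ex _]].
have [s [f [Gf ->]]] := grading_ex x.
exists [seq (k, f k) | k <- s]; split; last by rewrite big_map.
by move=> p /mapP [k _ ->].
Qed.

Lemma hcompE l x k : homog_seq l -> x = \sum_(p <- l) p.2 ->
  hcomp k x = \sum_(p <- l | p.1 == k) p.2.
Proof.
move=> l_homog xE; have [dx_homog dxE] := hdecompP x.
pose l' := hdecomp x ++ [seq (p.1, - p.2) | p <- l].
have l'_homog : homog_seq l'.
  move=> p; rewrite mem_cat => /orP [/dx_homog //|/mapP [q ql ->]] /=.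
  by apply: gradingN; apply: l_homog.
have l'_sum0 : \sum_(p <- l') p.2 = 0.
  by rewrite big_cat big_map /= sumrN -dxE -xE subrr.
move: (homog_sum_eq0 k l'_homog l'_sum0).
by rewrite big_cat big_map /= sumrN => /eqP; rewrite subr_eq0 => /eqP.
Qed.

Lemma hcompP k x : G k (hcomp k x).
Proof.
rewrite /hcomp big_seq_cond; apply: grading_sum => p /andP [pl /eqP <-].
by case: (hdecompP x) => dx_homog _; apply: dx_homog.
Qed.

Lemma hcomp_sum_uniq (s : seq int) (f : int -> T) k : uniq s ->
  (forall j, j \in s -> G j (f j)) ->
  hcomp k (\sum_(j <- s) f j) = if k \in s then f k else 0.
Proof.
move=> s_uniq Gf; rewrite (hcompE (l := [seq (j, f j) | j <- s])) ?big_map //.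
  by rewrite big_pred1_uniq.
by move=> p /mapP [j js ->]; apply: Gf.
Qed.

Lemma hcomp_homog j y k : G j y -> hcomp k y = if k == j then y else 0.
Proof.
move=> Gy; have := hcomp_sum_uniq k (f := fun=> y) (s := [:: j]) isT.
by rewrite big_seq1 inE; apply=> i; rewrite inE => /eqP ->.
Qed.

Lemma hcompD k : {morph hcomp k : x y / x + y}.
Proof.
move=> x y; have [x_homog xE] := hdecompP x; have [y_homog yE] := hdecompP y.
rewrite (hcompE (l := hdecomp x ++ hdecomp y)) ?big_cat -?xE -?yE //.
by move=> p; rewrite mem_cat => /orP [/x_homog|/y_homog].
Qed.

Lemma hcomp_notin k x : k \notin hsupp x -> hcomp k x = 0.
Proof.
move=> kNx; rewrite /hcomp big_seq_cond big1 // => p /andP [px /eqP pk].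
by move: kNx; rewrite mem_undup -pk map_f.
Qed.

Lemma sum_hcomp x : x = \sum_(k <- hsupp x) hcomp k x.
Proof. by case: (hdecompP x) => _ {1}->; rewrite sum_by_degree. Qed.

Lemma hcomp_inj x y : (forall k, hcomp k x = hcomp k y) -> x = y.
Proof.
move=> xy; apply/eqP; rewrite -subr_eq0 (sum_hcomp (x - y)) big1 // => k _.
by rewrite (additiveB (hcompD k)) xy subrr.
Qed.

End GradedComponents.

Lemma hcomp_shifted_morph (T U : zmodType) (G : int -> T -> Prop) (H : int -> U -> Prop)
    (h : T -> U) (n : int) :
  is_grading G -> is_grading H -> {morph h : x y / x + y} ->
  (forall j y, G j y -> H (j + n) (h y)) ->
  forall k x, hcomp H k (h x) = h (hcomp G (k - n) x).
Proof.
move=> HG HH hD h_deg k x; have [x_homog xE] := hdecompP HG x.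
rewrite (hcompE HH (l := [seq (p.1 + n, h p.2) | p <- hdecomp G x])).
- rewrite big_map /hcomp (additive_sum hD); apply: eq_bigl => p /=.
  by rewrite -(inj_eq (addIr (- n))) addrK.
- by move=> p /mapP [q qx ->]; apply/h_deg/x_homog.
- by rewrite big_map -(additive_sum hD) -xE.
Qed.

Section DgSubmodules.
Variables (T : pzRingType) (M : lmodType T) (GM : int -> M -> Prop) (delta : M -> M).

Lemma dg_submoduleD (N : M -> Prop) x y :
  dg_submodule GM delta N -> N x -> N y -> N (x + y).
Proof.
case=> N0 [NB _] Nx Ny.
by have := NB x (0 - y) Nx (NB 0 y N0 Ny); rewrite sub0r opprK.
Qed.

Lemma dg_submoduleI (N1 N2 : M -> Prop) :
  dg_submodule GM delta N1 -> dg_submodule GM delta N2 ->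
  dg_submodule GM delta (fun x => N1 x /\ N2 x).
Proof.
case=> N1_0 [N1B [N1Z [N1d N1_hcomp]]] [N2_0 [N2B [N2Z [N2d N2_hcomp]]]].
split; first by [].
split; first by move=> x y [? ?] [? ?]; split; [apply: N1B | apply: N2B].
split; first by move=> a x [? ?]; split; [apply: N1Z | apply: N2Z].
split; first by move=> x [? ?]; split; [apply: N1d | apply: N2d].
by move=> s f s_uniq Gf [? ?] k ks; split; [apply: N1_hcomp ks | apply: N2_hcomp ks].
Qed.

Lemma dg_submodule_hcomp (N : M -> Prop) k y : is_grading GM ->
  dg_submodule GM delta N -> N y -> N (hcomp GM k y).
Proof.
move=> HG [N0 [_ [_ [_ N_hcomp]]]] Ny.
have [kx|kNx] := boolP (k \in hsupp GM y); last by rewrite hcomp_notin.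
apply: (N_hcomp (hsupp GM y) (fun j => hcomp GM j y)) => //.
- exact: undup_uniq.
- by move=> j; apply: hcompP.
- by rewrite -sum_hcomp.
Qed.

End DgSubmodules.

Lemma grading_sgnA (T : pzRingType) (G : int -> T -> Prop) i k a :
  is_grading G -> G k a -> G k (sgnA i * a).
Proof. by move=> HG; rewrite mul_sgnA; case: odd => // /(gradingN HG). Qed.

Section Twist.
Variables (R : comNzRingType) (A : algType R) (GA : int -> A -> Prop) (d : A -> A).
Hypothesis HA : dg_algebra GA d.

Lemma dg_algebra_grading : is_grading GA.
Proof. by case: HA. Qed.

Lemma dg_algebra_1 : GA 0 1.
Proof. by case: HA => _ [_ []]. Qed.

Lemma dg_algebra_mul i j a b : GA i a -> GA j b -> GA (i + j) (a * b).
Proof. by case: HA => _ [_ [_ [GAM _]]]; apply: GAM. Qed.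

Lemma dg_algebra_dD : {morph d : a b / a + b}.
Proof. by case: HA => _ [_ [_ [_ [dD _]]]]. Qed.

Lemma dg_algebra_d k a : GA k a -> GA (k + 1) (d a).
Proof. by case: HA => _ [_ [_ [_ [_ [_ [GAd _]]]]]]; apply: GAd. Qed.

Let HGA := dg_algebra_grading.
Let GAhcomp := hcompP HGA.

Variable n : int.

Definition twist (b : A) : A := \sum_(j <- hsupp GA b) sgnA (n * j) * hcomp GA j b.

Lemma hcomp_twist k b : hcomp GA k (twist b) = sgnA (n * k) * hcomp GA k b.
Proof.
rewrite (hcomp_sum_uniq HGA) ?undup_uniq // => [|j _].
  by case: ifP => // /negbT kNb; rewrite (hcomp_notin kNb) mulr0.
exact: grading_sgnA _ HGA (GAhcomp j b).
Qed.

Lemma twist_homog j b : GA j b -> twist b = sgnA (n * j) * b.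
Proof.
move=> GAb; apply: (hcomp_inj HGA) => k.
rewrite hcomp_twist (hcomp_homog HGA _ GAb).
rewrite (hcomp_homog HGA _ (grading_sgnA _ HGA GAb)).
by case: eqP => [->|]; rewrite ?mulr0.
Qed.

Lemma twistD : {morph twist : a b / a + b}.
Proof.
move=> a b; apply: (hcomp_inj HGA) => k.
by rewrite hcomp_twist !(hcompD HGA) !hcomp_twist mulrDr.
Qed.

Lemma twistK : involutive twist.
Proof. by move=> b; apply: (hcomp_inj HGA) => k; rewrite !hcomp_twist sgnAMK. Qed.

Lemma twist1 : twist 1 = 1.
Proof. by rewrite (twist_homog dg_algebra_1) mulr0 sgnA0 mul1r. Qed.

Lemma twistM a b : twist (a * b) = twist a * twist b.
Proof.
rewrite {1}(sum_hcomp HGA a) {1}(sum_hcomp HGA b).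
rewrite mulr_suml (additive_sum twistD) [twist a]/twist [twist b]/twist mulr_suml.
apply: eq_bigr => i _.
rewrite mulr_sumr (additive_sum twistD) mulr_sumr; apply: eq_bigr => j _.
rewrite (twist_homog (dg_algebra_mul (GAhcomp i a) (GAhcomp j b))).
by rewrite mulrDr sgnAD !sgnA_odd mulr_signM signr_addb.
Qed.

Lemma twist_d b : twist (d b) = sgnA n * d (twist b).
Proof.
rewrite {1}(sum_hcomp HGA b) !(additive_sum dg_algebra_dD).
rewrite (additive_sum twistD) mulr_sumr; apply: eq_bigr => j _.
rewrite (twist_homog (dg_algebra_d (GAhcomp j b))) (additive_sgnA _ _ dg_algebra_dD).
by rewrite mulrA -sgnAD mulrDr mulr1 addrC.
Qed.

End Twist.

Section TwistedEvaluation.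
Variables (R : comNzRingType) (A : algType R) (GA : int -> A -> Prop) (d : A -> A).
Hypothesis HA : dg_algebra GA d.
Variables (S : lmodType A) (GS : int -> S -> Prop) (delta : S -> S).
Hypothesis HS : dg_module GA d GS delta.

Lemma dg_module_grading : is_grading GS.
Proof. by case: HS. Qed.

Lemma dg_module_act i j a m : GA i a -> GS j m -> GS (i + j) (a *: m).
Proof. by case: HS => _ [GSZ _]; apply: GSZ. Qed.

Lemma dg_module_deltaD : {morph delta : m m' / m + m'}.
Proof. by case: HS => _ [_ [deltaD _]]. Qed.

Lemma dg_module_delta k m : GS k m -> GS (k + 1) (delta m).
Proof. by case: HS => _ [_ [_ [_ [GSdelta _]]]]; apply: GSdelta. Qed.

Lemma dg_module_deltaK m : delta (delta m) = 0.
Proof. by case: HS => _ [_ [_ [_ [_ [deltaK _]]]]]. Qed.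

Lemma dg_module_Leibniz i a m :
  GA i a -> delta (a *: m) = d a *: m + sgnA i *: (a *: delta m).
Proof. by case: HS => _ [_ [_ [_ [_ [_ Leibniz]]]]]; apply: Leibniz. Qed.

Let HGA := dg_algebra_grading HA.
Let HGS := dg_module_grading.

Lemma dg_simple_homog_cycle : dg_simple GS delta ->
  exists n z, [/\ GS n z, delta z = 0 & z != 0].
Proof.
case=> _ [[x [_ x_neq0]] _].
have [k _ xk_neq0] : exists2 k, k \in hsupp GS x & hcomp GS k x != 0.
  apply/hasP; apply: contra_notT x_neq0 => /hasPn xk0.
  by rewrite (sum_hcomp HGS x) big_seq big1 // => k /xk0 /negPn /eqP.
have GSxk := hcompP HGS k x.
have [delta_xk0|delta_xk_neq0] := eqVneq (delta (hcomp GS k x)) 0.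
  by exists k, (hcomp GS k x).
exists (k + 1), (delta (hcomp GS k x)).
by split; [apply: dg_module_delta | apply: dg_module_deltaK |].
Qed.

Variables (n : int) (z : S).
Hypotheses (GSz : GS n z) (delta_z : delta z = 0).

Definition twisted_ev (b : A) : S := twist GA n b *: z.

Lemma twisted_evD : {morph twisted_ev : a b / a + b}.
Proof. by move=> a b; rewrite /twisted_ev (twistD HA) scalerDl. Qed.

Lemma twisted_ev_graded j b : GA j b -> GS (j + n) (twisted_ev b).
Proof.
move=> GAb; rewrite /twisted_ev (twist_homog HA _ GAb).
exact: (dg_module_act (grading_sgnA _ HGA GAb) GSz).
Qed.

Lemma twisted_evM a b : twisted_ev (a * b) = twist GA n a *: twisted_ev b.
Proof. by rewrite /twisted_ev (twistM HA) scalerA. Qed.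

Lemma twisted_ev1 : twisted_ev 1 = z.
Proof. by rewrite /twisted_ev (twist1 HA) scale1r. Qed.

Lemma twisted_ev_sgnA i b : twisted_ev (sgnA i * b) = sgnA i *: twisted_ev b.
Proof. by rewrite /twisted_ev (additive_sgnA _ _ (twistD HA n)) scalerA. Qed.

Lemma delta_scale_cycle c : delta (c *: z) = d c *: z.
Proof.
rewrite (sum_hcomp HGA c) scaler_suml !(additive_sum dg_module_deltaD).
rewrite (additive_sum (dg_algebra_dD HA)) scaler_suml; apply: eq_bigr => j _.
by rewrite (dg_module_Leibniz _ (hcompP HGA j c)) delta_z !scaler0 addr0.
Qed.

Lemma twisted_ev_d b : twisted_ev (d b) = sgnA n *: delta (twisted_ev b).
Proof. by rewrite /twisted_ev (twist_d HA) -scalerA delta_scale_cycle. Qed.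

Lemma hcomp_twisted_ev k b : hcomp GS (k + n) (twisted_ev b) = twisted_ev (hcomp GA k b).
Proof. by rewrite (hcomp_shifted_morph HGA HGS twisted_evD twisted_ev_graded) addrK. Qed.

Lemma twisted_ev_ker : dg_submodule (M := A^o) GA d (fun b => twisted_ev b = 0).
Proof.
split; first exact: (additive0 twisted_evD).
split; first by move=> x y x0 y0; rewrite (additiveB twisted_evD) x0 y0 subr0.
split; first by move=> a x x0; rewrite [twisted_ev _]twisted_evM x0 scaler0.
split; first by move=> x x0; rewrite twisted_ev_d x0 (additive0 dg_module_deltaD) scaler0.
move=> s f s_uniq Gf sum0 k ks.
have := hcomp_twisted_ev k (\sum_(j <- s) f j).
by rewrite sum0 (additive0 (hcompD HGS _)) (hcomp_sum_uniq HGA) // ks.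
Qed.

Lemma twisted_ev_image (N : A^o -> Prop) : dg_submodule (M := A^o) GA d N ->
  dg_submodule GS delta (fun s => exists2 y, N y & twisted_ev y = s).
Proof.
move=> N_sub; have [N0 [NB [NZ [Nd _]]]] := N_sub.
split; first by exists 0; last exact: (additive0 twisted_evD).
split.
  move=> _ _ [y1 Ny1 <-] [y2 Ny2 <-].
  by exists (y1 - y2); [apply: NB | rewrite (additiveB twisted_evD)].
split.
  move=> a _ [y Ny <-]; exists (twist GA n a * y); first exact: (NZ _ y Ny).
  by rewrite twisted_evM (twistK HA).
split.
  move=> _ [y Ny <-]; exists (sgnA n * d y); first exact: (NZ _ _ (Nd y Ny)).
  by rewrite twisted_ev_sgnA twisted_ev_d sgnAZK.
move=> s g s_uniq Gg [y Ny yE] k ks; exists (hcomp GA (k - n) y).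
  exact: (dg_submodule_hcomp (M := A^o) _ HGA N_sub Ny).
by rewrite -hcomp_twisted_ev subrK yE (hcomp_sum_uniq HGS) // ks.
Qed.

Variables (N : A^o -> Prop) (x0 : A).
Hypotheses (N_simple : dg_simple_sub (M := A^o) GA d N) (Nx0 : N x0).
Hypothesis ev_x0 : twisted_ev x0 <> 0.

Let N_sub : dg_submodule (M := A^o) GA d N := N_simple.1.

Lemma twisted_ev_ker_on y : N y -> twisted_ev y = 0 -> y = 0.
Proof.
have [_ [_ N_min]] := N_simple.
have [ker0|kerN] := N_min _ (dg_submoduleI N_sub twisted_ev_ker) (fun _ h => h.1).
  by move=> Ny ev_y; apply: ker0.
by have [] := kerN _ Nx0.
Qed.

Lemma twisted_ev_injective_on y y' :
  N y -> N y' -> twisted_ev y = twisted_ev y' -> y = y'.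
Proof.
have [_ [NB _]] := N_sub; move=> Ny Ny' ev_yy'.
apply/eqP; rewrite -subr_eq0; apply/eqP/twisted_ev_ker_on; first exact: NB.
by rewrite (additiveB twisted_evD) ev_yy' subrr.
Qed.

Lemma twisted_ev_onto :
  dg_simple GS delta -> forall s, exists y, N y /\ twisted_ev y = s.
Proof.
case=> _ [_ S_min]; have [im0|imS] := S_min _ (twisted_ev_image N_sub) (fun _ _ => I).
  by case: ev_x0; apply: im0; exists x0.
by move=> s; have [y] := imS s I; exists y.
Qed.

Lemma twisted_ev_graded_on k y : N y -> GS (k + n) (twisted_ev y) -> GA k y.
Proof.
move=> Ny GSy; suff -> : y = hcomp GA k y by apply: hcompP.
apply: (hcomp_inj HGA) => j; rewrite (hcomp_homog HGA _ (hcompP HGA k y)).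
case: eqP => [-> //|jk]; apply: twisted_ev_ker_on.
  exact: (dg_submodule_hcomp (M := A^o) _ HGA N_sub Ny).
rewrite -hcomp_twisted_ev (hcomp_homog HGS _ GSy).
by case: eqP => // /addIr.
Qed.

Lemma twisted_ev_inverse_shift_iso (f : S -> A) :
  (forall s, N (f s)) -> cancel f twisted_ev ->
  dg_shift_iso GA GS delta (M := A^o) GA d n f N.
Proof.
move=> Nf fK; have [_ [_ [NZ [Nd _]]]] := N_sub.
have f_eq y s : N y -> twisted_ev y = s -> f s = y.
  by move=> Ny <-; apply: twisted_ev_injective_on; rewrite ?fK.
split.
  move=> s s'; apply: f_eq; first exact: dg_submoduleD N_sub (Nf s) (Nf s').
  by rewrite twisted_evD !fK.
split; first exact: can_inj fK.
split; first by move=> y; split=> [Ny|[s <-]]; [exists (twisted_ev y); apply: f_eq|].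
split; first by move=> k s GSs; apply: twisted_ev_graded_on; rewrite ?fK.
split.
  move=> i a s GAa; apply: f_eq; first exact: NZ.
  by rewrite [twisted_ev _]twisted_evM fK (twist_homog HA _ GAa) -scalerA.
move=> s; apply: f_eq; first exact: Nd.
by rewrite twisted_ev_d fK.
Qed.

End TwistedEvaluation.

Theorem lemma3p6 (R : comNzRingType) (A : algType R)
    (GA : int -> A -> Prop) (d : A -> A)
    (HA : dg_algebra GA d)
    (Hsum : exists (m : nat) (N : 'I_m -> A^o -> Prop),
        (forall i, dg_simple_sub (M := A^o) GA d (N i)) /\ internal_dsum N)
    (S : lmodType A) (GS : int -> S -> Prop) (delta : S -> S)
    (HS : dg_module GA d GS delta)
    (Hsimple : dg_simple GS delta) :
  exists (n : int) (N N' : A^o -> Prop) (f : S -> A^o),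
    dg_submodule (M := A^o) GA d N /\ dg_submodule (M := A^o) GA d N' /\
    (forall x : A, exists y z, N y /\ N' z /\ x = y + z) /\
    (forall y : A, N y -> N' y -> y = 0) /\
    dg_shift_iso GA GS delta (M := A^o) GA d n f N.
Proof.
have [n [z [GSz delta_z z_neq0]]] := dg_simple_homog_cycle HS Hsimple.
have [m [N [N_simple [N_cover _]]]] := Hsum.
have [x [Nx x1]] := N_cover 1.
have evD := twisted_evD HA n z.
have [i /eqP ev_xi] : exists i, twisted_ev GA n z (x i) != 0.
  apply/existsP; apply: contraNT z_neq0 => /existsPn ev_x0.
  rewrite -(twisted_ev1 HA n z) x1 (additive_sum evD) big1 // => j _.
  exact/eqP/negPn.
have [f fP] := choice _
  (twisted_ev_onto HA HS GSz delta_z (N_simple i) (Nx i) ev_xi Hsimple).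
have fK : cancel f (twisted_ev GA n z) := fun s => (fP s).2.
exists n, (N i), (fun y => twisted_ev GA n z y = 0), f.
split; first exact: (N_simple i).1.
split; first exact: (twisted_ev_ker HA HS GSz delta_z).
split.
  move=> y; exists (f (twisted_ev GA n z y)), (y - f (twisted_ev GA n z y)).
  by rewrite (additiveB evD) fK subrr addrC subrK; split; first exact: (fP _).1.
split; first exact: (twisted_ev_ker_on HA HS GSz delta_z (N_simple i) (Nx i) ev_xi).
exact: (twisted_ev_inverse_shift_iso HA HS GSz delta_z (N_simple i) (Nx i) ev_xi
          (fun s => (fP s).1) fK).
Qed.
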